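(* For all $\nu\in\mathbb C$, integers $m\ge0$ and $x\in\mathbb C\setminus\{0\}$, $$x^mR_{m,\nu}(x;q)=\sum_{n=0}^m x^{2n}\sum_{j=0}^{m-n}\frac{(q^{n-m};q)_j(q^{n+1};q)_j}{(q;q)_j(q;q)_j}\,q^{j(\nu+m-n)}.$$ If moreover $q^{\nu+i}\ne1$ for all integers $i\ge0$, then $$R_{m,\nu}(x;q)=\sum_{n=0}^m x^{2n-m}\frac{(q^\nu;q)_{m-n}}{(q;q)_n}\sum_{j=0}^{n}\frac{(q^{-n};q)_j(q^{\nu+m-n};q)_j}{(q;q)_j(q^\nu;q)_j}\,q^{j(n+1)}.$$
   Context: Fix $0<q<1$; $(a;q)_0=1$, $(a;q)_k=\prod_{i=0}^{k-1}(1-aq^i)$. The $q$-Lommel functions $R_{m,\nu}(x;q)$ are defined by $R_{-1,\nu}=0$, $R_{0,\nu}=1$ and $R_{m+1,\nu}(x;q)=\big(x+\frac{1-q^\nu}{x}\big)R_{m,\nu+1}(x;q)-R_{m-1,\nu+2}(x;q)$ for $m\ge0$. *)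

From Stdlib Require Import Reals.
From Coquelicot Require Import Coquelicot.
Open Scope R_scope.

(* complex power of the real base q>0 : q^z := exp(z ln q) *)
Definition qpow (q : R) (z : C) : C :=
  (exp (Re z * ln q) * cos (Im z * ln q), exp (Re z * ln q) * sin (Im z * ln q)).

Fixpoint qpoch (a : C) (q : R) (k : nat) : C :=
  match k with
  | O => RtoC 1
  | S k' => Cmult (qpoch a q k') (Cminus (RtoC 1) (Cmult a (RtoC (q ^ k'))))
  end.

(* q-Lommel functions R_{m,nu}(x;q), via
   R_{-1,nu}=0, R_{0,nu}=1,
   R_{m+1,nu} = (x + (1-q^nu)/x) R_{m,nu+1} - R_{m-1,nu+2}. *)
Fixpoint qLommel (q : R) (m : nat) (nu : C) (x : C) : C :=
  match m with
  | O => RtoC 1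
  | S m' =>
    let c := Cplus x (Cdiv (Cminus (RtoC 1) (qpow q nu)) x) in
    match m' with
    | O => Cminus (Cmult c (RtoC 1)) (RtoC 0)
    | S m'' => Cminus (Cmult c (qLommel q m' (Cplus nu (RtoC 1)) x))
                      (qLommel q m'' (Cplus nu (RtoC 2)) x)
    end
  end.

From Stdlib Require Import Reals Lra Lia Wf_nat.
From Coquelicot Require Import Coquelicot.
Open Scope R_scope.

(* Put t = q^nu and y = x^2.  Then x^m R_{m,nu}(x;q) = sum_n y^n A_{m-n,n}(t), where
   A_{k,n}(t) = sum_j (-1)^j q^(j(j-1)/2) [k,j]_q [n+j,j]_q t^j: both sides obey the three-term
   recurrence of R, the right-hand side because the coefficients of A obey the q-Pascal rule.
   The first formula is this expansion with the coefficients written as q-shifted factorials,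
   using (q^-k;q)_j q^(kj) = (-1)^j q^(j(j-1)/2) [k,j]_q (q;q)_j and (q^(n+1);q)_j = [n+j,j]_q (q;q)_j.
   For the second, (t;q)_k (tq^k;q)_j / (t;q)_j = (tq^j;q)_k; expanding this by the q-binomial
   theorem and exchanging the sums, the inner sum over j is the q-binomial expansion of
   (q^(i+1);q)_n = [n+i,i]_q (q;q)_n. *)

Fixpoint qpochR (a q : R) (j : nat) : R :=
  match j with O => 1 | S j' => qpochR a q j' * (1 - a * q ^ j') end.

Definition qfac (q : R) (n : nat) : R := qpochR q q n.

Fixpoint qbinom (q : R) (n k : nat) : R :=
  match n, k with
  | _, O => 1
  | O, S _ => 0
  | S n', S k' => qbinom q n' k' + q ^ S k' * qbinom q n' (S k')
  end.

(* qsign q j = (-1)^j q^(j(j-1)/2) *)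
Fixpoint qsign (q : R) (j : nat) : R :=
  match j with O => 1 | S j' => - q ^ j' * qsign q j' end.

Lemma qpochR_S a q j : qpochR a q (S j) = qpochR a q j * (1 - a * q ^ j).
Proof. reflexivity. Qed.

Lemma qfac_S q n : qfac q (S n) = qfac q n * (1 - q ^ S n).
Proof. reflexivity. Qed.

Section QCombinatorics.

Variable q : R.
Hypothesis hq : 0 < q < 1.

Lemma qfac_neq0 n : qfac q n <> 0.
Proof.
  apply Rgt_not_eq; induction n as [|n IH]; [unfold qfac; simpl; lra|].
  rewrite qfac_S; apply Rmult_lt_0_compat; [exact IH|].
  assert (q ^ S n < 1) by (apply pow_lt_1_compat; lra || lia). lra.
Qed.

Lemma qbinom_n0 n : qbinom q n 0 = 1.
Proof. now destruct n. Qed.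

Lemma qbinom_gt n k : (n < k)%nat -> qbinom q n k = 0.
Proof.
  revert k; induction n as [|n IH]; intros [|k] Hk; simpl; try lia; trivial.
  rewrite !IH by lia. ring.
Qed.

Lemma qbinom_nn n : qbinom q n n = 1.
Proof. induction n as [|n IH]; simpl; trivial. rewrite IH, qbinom_gt by lia. ring. Qed.

Lemma qbinom_qfac n k : (k <= n)%nat -> qbinom q n k * qfac q k * qfac q (n - k) = qfac q n.
Proof.
  revert k; induction n as [|n IH]; intros [|k] Hk; simpl qbinom; try lia;
    rewrite ?Nat.sub_0_r; try (unfold qfac; simpl; ring).
  replace (S n - S k)%nat with (n - k)%nat by lia.
  destruct (Nat.eq_dec k n) as [->|Hne].
  - rewrite qbinom_nn, qbinom_gt, Nat.sub_diag by lia.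
    change (qfac q 0) with 1; ring.
  - specialize (IH k ltac:(lia)) as E1; specialize (IH (S k) ltac:(lia)) as E2.
    replace (n - k)%nat with (S (n - S k)) in * by lia.
    rewrite !qfac_S in *.
    assert (HP : q ^ S n = q ^ S k * q ^ S (n - S k)) by (rewrite <- pow_add; f_equal; lia).
    transitivity (qfac q n * (1 - q ^ S k) + q ^ S k * (1 - q ^ S (n - S k)) * qfac q n).
    + rewrite <- E1 at 1; rewrite <- E2; simpl; ring.
    + rewrite HP; ring.
Qed.

Lemma qfac_qfac_neq0 j n : qfac q j * qfac q n <> 0.
Proof. apply Rmult_integral_contrapositive; split; apply qfac_neq0. Qed.

Lemma qbinom_sym a b : qbinom q (a + b) a = qbinom q (a + b) b.
Proof.
  apply (Rmult_eq_reg_r (qfac q a * qfac q b)); [|apply qfac_qfac_neq0].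
  pose proof (qbinom_qfac (a + b) a ltac:(lia)) as Ea.
  pose proof (qbinom_qfac (a + b) b ltac:(lia)) as Eb.
  replace (a + b - a)%nat with b in Ea by lia.
  replace (a + b - b)%nat with a in Eb by lia.
  rewrite Rmult_assoc in Ea, Eb; rewrite Ea, (Rmult_comm (qfac q a)), Eb. reflexivity.
Qed.

Lemma qbinom_S_ratio k j :
  qbinom q k (S j) * (1 - q ^ S j) = qbinom q k j * (1 - q ^ (k - j)).
Proof.
  destruct (Nat.le_gt_cases k j) as [Hkj|Hjk].
  - rewrite qbinom_gt by lia. replace (k - j)%nat with O by lia. simpl; ring.
  - apply (Rmult_eq_reg_r (qfac q j * qfac q (k - S j))); [|apply qfac_qfac_neq0].
    pose proof (qbinom_qfac k (S j) ltac:(lia)) as E1.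
    pose proof (qbinom_qfac k j ltac:(lia)) as E2.
    replace (k - j)%nat with (S (k - S j)) in E2 |- * by lia.
    rewrite !qfac_S in E1, E2.
    transitivity (qbinom q k (S j) * (qfac q j * (1 - q ^ S j)) * qfac q (k - S j)); [ring|].
    rewrite E1, <- E2. ring.
Qed.

(* Both sides vanish for j > k. *)
Lemma qpochR_qinv k j : qpochR (/ q ^ k) q j * (q ^ k) ^ j = qsign q j * qbinom q k j * qfac q j.
Proof.
  induction j as [|j IH]; [simpl; rewrite qbinom_n0; unfold qfac; simpl; ring|].
  assert (Hqk : q ^ k <> 0) by (apply pow_nonzero; lra).
  transitivity (qpochR (/ q ^ k) q j * (q ^ k) ^ j * (q ^ k - q ^ j)); [simpl; field; exact Hqk|].
  rewrite IH, qfac_S; simpl qsign.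
  transitivity (- q ^ j * qsign q j * qfac q j * (qbinom q k (S j) * (1 - q ^ S j))); [|ring].
  rewrite qbinom_S_ratio.
  destruct (Nat.le_gt_cases k j) as [Hkj|Hjk].
  - replace (k - j)%nat with O by lia.
    destruct (Nat.eq_dec k j) as [->|]; [|rewrite qbinom_gt by lia]; simpl; ring.
  - replace (q ^ k) with (q ^ j * q ^ (k - j)) by (rewrite <- pow_add; f_equal; lia). ring.
Qed.

Lemma qpochR_qsucc n j : qpochR (q ^ S n) q j = qbinom q (n + j) j * qfac q j.
Proof.
  induction j as [|j IH]; [simpl; rewrite qbinom_n0; unfold qfac; simpl; ring|].
  apply (Rmult_eq_reg_r (qfac q n)); [|apply qfac_neq0].
  pose proof (qbinom_qfac (S (n + j)) (S j) ltac:(lia)) as E1.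
  pose proof (qbinom_qfac (n + j) j ltac:(lia)) as E2.
  replace (S (n + j) - S j)%nat with n in E1 by lia.
  replace (n + j - j)%nat with n in E2 by lia.
  rewrite qpochR_S, IH, <- plus_n_Sm, E1.
  transitivity (qbinom q (n + j) j * qfac q j * qfac q n * (1 - q ^ S n * q ^ j)); [ring|].
  rewrite E2, <- pow_add, qfac_S. reflexivity.
Qed.

End QCombinatorics.

(* Coquelicot states its sum_n lemmas with the generic [plus]/[mult], which do not match
   [Cplus]/[Cmult] syntactically; the casts to [C] keep the equalities in [C], where [ring] works. *)
Lemma sum_n_CS (f : nat -> C) n : sum_n f (S n) = Cplus (sum_n f n) (f (S n)).
Proof. exact (sum_Sn f n). Qed.

Lemma sum_n_Cext (f g : nat -> C) n :
  (forall i, (i <= n)%nat -> f i = g i) -> sum_n f n = sum_n g n.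
Proof. exact (sum_n_ext_loc f g n). Qed.

Lemma sum_n_Cplus (f g : nat -> C) n :
  sum_n (fun i => Cplus (f i) (g i)) n = Cplus (sum_n f n) (sum_n g n).
Proof. exact (sum_n_plus f g n). Qed.

Lemma sum_n_Cmult_l (c : C) (f : nat -> C) n :
  sum_n (fun i => Cmult c (f i)) n = Cmult c (sum_n f n).
Proof. exact (sum_n_mult_l c f n). Qed.

Lemma sum_n_Cminus (f g : nat -> C) n :
  (sum_n (fun i => Cminus (f i) (g i)) n : C) = Cminus (sum_n f n) (sum_n g n).
Proof.
  transitivity (sum_n (fun i => Cplus (f i) (Cmult (RtoC (-1)) (g i))) n).
  - apply sum_n_Cext; intros i _; ring.
  - rewrite sum_n_Cplus, sum_n_Cmult_l. ring.
Qed.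

Lemma sum_n_Cshift (f : nat -> C) n :
  (sum_n f (S n) : C) = Cplus (f O) (sum_n (fun i => f (S i)) n).
Proof.
  induction n as [|n IH]; rewrite sum_n_CS, ?IH, ?sum_n_CS, ?sum_O; [reflexivity|ring].
Qed.

Lemma sum_n_Ctrunc (f : nat -> C) n N : (n <= N)%nat ->
  (forall i, (n < i <= N)%nat -> f i = RtoC 0) -> (sum_n f N : C) = sum_n f n.
Proof.
  induction N as [|N IH]; intros HnN Hf.
  - now replace n with O by lia.
  - destruct (Nat.eq_dec n (S N)) as [->|Hne]; [reflexivity|].
    rewrite sum_n_CS, IH, (Hf (S N)); [ring|lia|lia|].
    intros i Hi; apply Hf; lia.
Qed.

Lemma RtoC_neq0 r : r <> 0 -> RtoC r <> RtoC 0.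
Proof. intros Hr E; apply Hr; exact (f_equal fst E). Qed.

Lemma qpow_RtoC q r : qpow q (RtoC r) = RtoC (Rpower q r).
Proof.
  unfold qpow, Rpower, RtoC; simpl. rewrite Rmult_0_l, cos_0, sin_0. f_equal; ring.
Qed.

Lemma qpow_plus q z w : qpow q (Cplus z w) = Cmult (qpow q z) (qpow q w).
Proof.
  destruct z as [a b], w as [c d]; unfold qpow, Cplus, Cmult; simpl.
  rewrite !Rmult_plus_distr_r, exp_plus, cos_plus, sin_plus. f_equal; ring.
Qed.

Lemma qpow_nat_mult q j z : qpow q (Cmult (RtoC (INR j)) z) = Cpow (qpow q z) j.
Proof.
  induction j as [|j IH].
  - replace (Cmult (RtoC (INR 0)) z) with (RtoC 0) by (simpl; ring).
    rewrite qpow_RtoC; unfold Rpower; rewrite Rmult_0_l, exp_0. reflexivity.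
  - rewrite S_INR, RtoC_plus, Cmult_plus_distr_r, qpow_plus, IH, Cmult_1_l. simpl; ring.
Qed.

Section PositiveBase.

Variable q : R.
Hypothesis hq : 0 < q.

Lemma qpow_nat n : qpow q (RtoC (INR n)) = RtoC (q ^ n).
Proof. rewrite qpow_RtoC, Rpower_pow by exact hq. reflexivity. Qed.

Lemma qpow_opp_nat n : qpow q (RtoC (- INR n)) = RtoC (/ q ^ n).
Proof. rewrite qpow_RtoC, Rpower_Ropp, Rpower_pow by exact hq. reflexivity. Qed.

Lemma qpow_plus_nat nu n : qpow q (Cplus nu (RtoC (INR n))) = Cmult (qpow q nu) (RtoC (q ^ n)).
Proof. rewrite qpow_plus, qpow_nat. reflexivity. Qed.

End PositiveBase.

Lemma qpoch_S a q k :
  qpoch a q (S k) = Cmult (qpoch a q k) (Cminus (RtoC 1) (Cmult a (RtoC (q ^ k)))).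
Proof. reflexivity. Qed.

Lemma qpoch_RtoC a q j : qpoch (RtoC a) q j = RtoC (qpochR a q j).
Proof.
  induction j as [|j IH]; [reflexivity|].
  rewrite qpoch_S, qpochR_S, IH, <- RtoC_mult, <- RtoC_minus, <- RtoC_mult. reflexivity.
Qed.

Lemma qpoch_add a q k j :
  qpoch a q (k + j) = Cmult (qpoch a q k) (qpoch (Cmult a (RtoC (q ^ k))) q j).
Proof.
  induction j as [|j IH].
  - rewrite Nat.add_0_r; simpl; ring.
  - rewrite Nat.add_succ_r, !qpoch_S, IH, pow_add, RtoC_mult. ring.
Qed.

Lemma qpoch_S_front a q k :
  qpoch a q (S k) = Cmult (Cminus (RtoC 1) a) (qpoch (Cmult a (RtoC q)) q k).
Proof. change (S k) with (1 + k)%nat; rewrite qpoch_add; simpl; rewrite Rmult_1_r. f_equal; ring. Qed.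

Lemma qpoch_add_comm t q k j :
  Cmult (qpoch t q k) (qpoch (Cmult t (RtoC (q ^ k))) q j)
  = Cmult (qpoch t q j) (qpoch (Cmult t (RtoC (q ^ j))) q k).
Proof. rewrite <- !qpoch_add, Nat.add_comm. reflexivity. Qed.

Lemma qpoch_qpow_neq0 q (hq : 0 < q) nu :
  (forall i : nat, qpow q (Cplus nu (RtoC (INR i))) <> RtoC 1) ->
  forall j, qpoch (qpow q nu) q j <> RtoC 0.
Proof.
  intros Hnu j; induction j as [|j IH]; [exact C1_nz|].
  rewrite qpoch_S; apply Cmult_neq_0; [exact IH|].
  apply Cminus_eq_contra; intros E; apply (Hnu j).
  rewrite qpow_plus_nat by exact hq. symmetry; exact E.
Qed.

Definition peval (a : nat -> R) (N : nat) (t : C) : C :=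
  sum_n (fun j => Cmult (RtoC (a j)) (Cpow t j)) N.

Lemma peval_ext a b N t : (forall j, (j <= N)%nat -> a j = b j) -> peval a N t = peval b N t.
Proof. intros Hab; apply sum_n_Cext; intros j Hj; rewrite Hab by exact Hj. reflexivity. Qed.

Lemma peval_trunc a n N t : (n <= N)%nat -> (forall j, (n < j <= N)%nat -> a j = 0) ->
  peval a N t = peval a n t.
Proof.
  intros HnN Ha; apply sum_n_Ctrunc; [exact HnN|].
  intros j Hj; rewrite Ha by exact Hj. ring.
Qed.

Lemma peval_plus a b N t : Cplus (peval a N t) (peval b N t) = peval (fun j => a j + b j) N t.
Proof.
  unfold peval; rewrite <- sum_n_Cplus; apply sum_n_Cext; intros j _.
  rewrite RtoC_plus; ring.
Qed.

Lemma peval_minus a b N t : Cminus (peval a N t) (peval b N t) = peval (fun j => a j - b j) N t.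
Proof.
  unfold peval; rewrite <- sum_n_Cminus; apply sum_n_Cext; intros j _.
  rewrite RtoC_minus; ring.
Qed.

Lemma peval_scale a N t r : peval a N (Cmult t (RtoC r)) = peval (fun j => a j * r ^ j) N t.
Proof.
  apply sum_n_Cext; intros j _. rewrite Cpow_mult_l, <- RtoC_pow, RtoC_mult. ring.
Qed.

Lemma peval_mulX a N t :
  Cmult t (peval a N t) = peval (fun j => match j with O => 0 | S j' => a j' end) (S N) t.
Proof.
  unfold peval; rewrite sum_n_Cshift, <- sum_n_Cmult_l; simpl.
  rewrite Cmult_0_l, Cplus_0_l. apply sum_n_Cext; intros j _. ring.
Qed.

Lemma qpoch_eq_peval q k z : qpoch z q k = peval (fun i => qsign q i * qbinom q k i) k z.
Proof.
  revert z; induction k as [|k IH]; intros z.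
  - unfold peval; rewrite sum_O; simpl; rewrite Rmult_1_l; ring.
  - rewrite qpoch_S_front, IH, peval_scale.
    replace (Cmult (Cminus (RtoC 1) z) _) with
      (Cminus (peval (fun j => qsign q j * qbinom q k j * q ^ j) k z)
              (Cmult z (peval (fun j => qsign q j * qbinom q k j * q ^ j) k z))) by ring.
    rewrite peval_mulX, <- (peval_trunc _ k (S k)), peval_minus by
      (lia || (intros; rewrite qbinom_gt by lia; ring)).
    apply peval_ext; intros [|j] _; simpl qsign; simpl qbinom; rewrite ?qbinom_n0; simpl; ring.
Qed.

Definition lommel_coef (q : R) (k n j : nat) : R :=
  qsign q j * qbinom q k j * qbinom q (n + j) j.

Definition lommel_A (q : R) (k n : nat) (t : C) : C := peval (lommel_coef q k n) k t.

(* [x^m R_{m,nu}(x;q) = lommel_P q (x^2) m (q^nu)] *)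
Definition lommel_P (q : R) (y : C) (m : nat) (t : C) : C :=
  sum_n (fun n => Cmult (Cpow y n) (lommel_A q (m - n) n t)) m.

Lemma lommel_coef_gt q k n j : (k < j)%nat -> lommel_coef q k n j = 0.
Proof. intros Hkj; unfold lommel_coef; rewrite qbinom_gt by exact Hkj; ring. Qed.

Lemma lommel_coef_rec q k n j :
  lommel_coef q (S k) (S n) (S j) =
    lommel_coef q k (S n) (S j) * q ^ S j - lommel_coef q k (S n) j * q ^ j
    + lommel_coef q (S k) n (S j) * q ^ S j - lommel_coef q k n (S j) * (q * q) ^ S j.
Proof.
  unfold lommel_coef; rewrite <- !plus_n_Sm; simpl qbinom; simpl qsign.
  rewrite Rpow_mult_distr; simpl; ring.
Qed.

Lemma lommel_A_0n q n t : lommel_A q 0 n t = RtoC 1.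
Proof.
  unfold lommel_A, lommel_coef, peval; rewrite sum_O, !qbinom_n0; simpl; rewrite !Rmult_1_r; ring.
Qed.

Lemma lommel_A_k0 q k t : lommel_A q k 0 t = qpoch t q k.
Proof.
  rewrite qpoch_eq_peval; apply peval_ext; intros j _.
  unfold lommel_coef; rewrite qbinom_nn; ring.
Qed.

Lemma lommel_A_rec q k n t :
  lommel_A q (S k) (S n) t =
    Cminus (Cplus (Cmult (Cminus (RtoC 1) t) (lommel_A q k (S n) (Cmult t (RtoC q))))
                  (lommel_A q (S k) n (Cmult t (RtoC q))))
           (lommel_A q k n (Cmult t (RtoC (q * q)))).
Proof.
  unfold lommel_A; rewrite !peval_scale.
  set (a := fun j => lommel_coef q k (S n) j * q ^ j).
  replace (Cmult (Cminus (RtoC 1) t) (peval a k t))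
    with (Cminus (peval a k t) (Cmult t (peval a k t))) by ring.
  rewrite peval_mulX, <- (peval_trunc a k (S k)), <- (peval_trunc _ k (S k) t)
    by (lia || (intros; unfold a; rewrite lommel_coef_gt by lia; ring)).
  rewrite peval_minus, peval_plus, peval_minus.
  apply peval_ext; intros [|j] _; unfold a.
  - unfold lommel_coef; rewrite !qbinom_n0; simpl; ring.
  - rewrite lommel_coef_rec; simpl; ring.
Qed.

Section LommelP.

Variables (q : R) (y : C).

Lemma lommel_P_S_first m t :
  lommel_P q y (S m) t =
    Cplus (lommel_A q (S m) 0 t)
          (Cmult y (sum_n (fun i => Cmult (Cpow y i) (lommel_A q (m - i) (S i) t)) m)).
Proof.
  unfold lommel_P; rewrite sum_n_Cshift, <- sum_n_Cmult_l; simpl.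
  f_equal; [ring|]. apply sum_n_Cext; intros i _; ring.
Qed.

Lemma lommel_P_S_last m t :
  lommel_P q y (S m) t =
    Cplus (sum_n (fun i => Cmult (Cpow y i) (lommel_A q (S m - i) i t)) m) (Cpow y (S m)).
Proof. unfold lommel_P; rewrite sum_n_CS, Nat.sub_diag, lommel_A_0n. ring. Qed.

Lemma lommel_P_rec m t :
  lommel_P q y (S (S m)) t =
    Cminus (Cmult (Cplus y (Cminus (RtoC 1) t)) (lommel_P q y (S m) (Cmult t (RtoC q))))
           (Cmult y (lommel_P q y m (Cmult t (RtoC (q * q))))).
Proof.
  set (U := sum_n (fun i => Cmult (Cpow y i) (lommel_A q (m - i) (S i) (Cmult t (RtoC q)))) m).
  set (V := sum_n (fun i => Cmult (Cpow y i) (lommel_A q (S m - i) i (Cmult t (RtoC q)))) m).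
  assert (Hinner : (sum_n (fun i => Cmult (Cpow y i) (lommel_A q (S m - i) (S i) t)) (S m) : C)
            = Cplus (Cminus (Cplus (Cmult (Cminus (RtoC 1) t) U) V)
                            (lommel_P q y m (Cmult t (RtoC (q * q))))) (Cpow y (S m))).
  { rewrite sum_n_CS, Nat.sub_diag, lommel_A_0n.
    unfold U, V, lommel_P; rewrite <- sum_n_Cmult_l, <- sum_n_Cplus, <- sum_n_Cminus.
    f_equal; [|ring]. apply sum_n_Cext; intros i Hi.
    replace (S m - i)%nat with (S (m - i)) by lia. rewrite lommel_A_rec. ring. }
  rewrite lommel_P_S_first, Hinner, lommel_A_k0, qpoch_S_front, <- lommel_A_k0.
  set (P1 := lommel_P q y (S m) (Cmult t (RtoC q))).
  transitivity (Cminus (Cplus (Cmult (Cminus (RtoC 1) t) P1) (Cmult y P1))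
                       (Cmult y (lommel_P q y m (Cmult t (RtoC (q * q)))))); [|ring].
  unfold P1 at 1; rewrite lommel_P_S_first; unfold P1; rewrite lommel_P_S_last; fold U V.
  simpl Cpow; ring.
Qed.

End LommelP.

Lemma qLommel_SS q m nu x : qLommel q (S (S m)) nu x =
  Cminus (Cmult (Cplus x (Cdiv (Cminus (RtoC 1) (qpow q nu)) x)) (qLommel q (S m) (Cplus nu (RtoC 1)) x))
         (qLommel q m (Cplus nu (RtoC 2)) x).
Proof. reflexivity. Qed.

Lemma qLommel_eq_lommel_P q (hq : 0 < q) x (hx : x <> RtoC 0) m nu :
  Cmult (Cpow x m) (qLommel q m nu x) = lommel_P q (Cmult x x) m (qpow q nu).
Proof.
  revert nu; induction m as [m IH] using lt_wf_ind; intros nu.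
  destruct m as [|[|m]].
  - unfold lommel_P; rewrite sum_O, lommel_A_0n; simpl; ring.
  - unfold lommel_P; rewrite sum_n_CS, sum_O, lommel_A_0n, lommel_A_k0; simpl; field; exact hx.
  - assert (Hq1 : qpow q (Cplus nu (RtoC 1)) = Cmult (qpow q nu) (RtoC q)).
    { rewrite qpow_plus, qpow_RtoC, Rpower_1 by exact hq. reflexivity. }
    assert (Hq2 : qpow q (Cplus nu (RtoC 2)) = Cmult (qpow q nu) (RtoC (q * q))).
    { rewrite qpow_plus, qpow_RtoC; replace 2 with (INR 2) by (simpl; ring).
      rewrite Rpower_pow by exact hq. simpl; rewrite Rmult_1_r. reflexivity. }
    pose proof (IH (S m) ltac:(lia) (Cplus nu (RtoC 1))) as H1.
    pose proof (IH m ltac:(lia) (Cplus nu (RtoC 2))) as H2.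
    rewrite Hq1 in H1; rewrite Hq2 in H2.
    rewrite lommel_P_rec, <- H1, <- H2, qLommel_SS. simpl; field; exact hx.
Qed.

Section Coefficients.

Variable q : R.
Hypothesis hq : 0 < q < 1.

Lemma lommel_coef_qpochR k n j :
  lommel_coef q k n j
  = qpochR (/ q ^ k) q j * (q ^ k) ^ j * qpochR (q ^ S n) q j / (qfac q j * qfac q j).
Proof.
  rewrite qpochR_qinv, qpochR_qsucc by exact hq. unfold lommel_coef.
  field. apply qfac_neq0, hq.
Qed.

Lemma first_formula_term nu m n j : (n <= m)%nat ->
  Cmult (Cdiv (Cmult (qpoch (qpow q (RtoC (INR n - INR m))) q j)
                     (qpoch (qpow q (RtoC (INR n + 1))) q j))
              (Cmult (qpoch (RtoC q) q j) (qpoch (RtoC q) q j)))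
        (qpow q (Cmult (RtoC (INR j)) (Cplus nu (RtoC (INR m - INR n)))))
  = Cmult (RtoC (lommel_coef q (m - n) n j)) (Cpow (qpow q nu) j).
Proof.
  intros Hnm.
  replace (INR n - INR m) with (- INR (m - n)) by (rewrite minus_INR by exact Hnm; ring).
  rewrite <- minus_INR, <- S_INR by exact Hnm.
  rewrite qpow_nat_mult, qpow_plus_nat, qpow_opp_nat, qpow_nat, !qpoch_RtoC by lra.
  rewrite Cpow_mult_l, <- RtoC_pow, lommel_coef_qpochR.
  pose proof (qfac_qfac_neq0 q hq j j) as Hf.
  rewrite RtoC_div by exact Hf. unfold qfac; rewrite !RtoC_mult.
  field. apply RtoC_neq0, qfac_neq0, hq.
Qed.

Lemma lommel_A_eq_sum_qpoch k n t :
  sum_n (fun j => Cmult (RtoC (qsign q j * qbinom q n j * q ^ j / qfac q n))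
                        (qpoch (Cmult t (RtoC (q ^ j))) q k)) n
  = lommel_A q k n t.
Proof.
  transitivity (sum_n (fun j => sum_n (fun i =>
      Cmult (RtoC (qsign q j * qbinom q n j * q ^ j / qfac q n))
            (Cmult (RtoC (qsign q i * qbinom q k i)) (Cpow (Cmult t (RtoC (q ^ j))) i))) k) n).
  { apply sum_n_Cext; intros j _. rewrite qpoch_eq_peval; unfold peval.
    rewrite sum_n_Cmult_l. reflexivity. }
  rewrite sum_n_switch; unfold lommel_A, peval; apply sum_n_Cext; intros i _.
  pose proof (qfac_neq0 q hq n) as Hfn.
  transitivity (Cmult (Cdiv (Cmult (RtoC (qsign q i * qbinom q k i)) (Cpow t i)) (RtoC (qfac q n)))
     (peval (fun j => qsign q j * qbinom q n j) n (RtoC (q ^ S i)))).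
  { unfold peval; rewrite <- sum_n_Cmult_l; apply sum_n_Cext; intros j _.
    rewrite !Cpow_mult_l, <- !RtoC_pow, RtoC_div, !RtoC_mult by exact Hfn.
    replace ((q ^ S i) ^ j) with ((q ^ j) ^ i * q ^ j)
      by (rewrite <- !pow_mult, <- pow_add; f_equal; lia).
    rewrite RtoC_mult. field. apply RtoC_neq0, Hfn. }
  rewrite <- qpoch_eq_peval, qpoch_RtoC, qpochR_qsucc, <- qbinom_sym by exact hq.
  unfold lommel_coef; rewrite Nat.add_comm, !RtoC_mult.
  field. apply RtoC_neq0, Hfn.
Qed.

Lemma second_formula_term nu m n j : (n <= m)%nat -> qpoch (qpow q nu) q j <> RtoC 0 ->
  Cmult (Cdiv (qpoch (qpow q nu) q (m - n)) (qpoch (RtoC q) q n))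
        (Cmult (Cdiv (Cmult (qpoch (qpow q (RtoC (- INR n))) q j)
                            (qpoch (qpow q (Cplus nu (RtoC (INR m - INR n)))) q j))
                     (Cmult (qpoch (RtoC q) q j) (qpoch (qpow q nu) q j)))
               (qpow q (RtoC (INR j * (INR n + 1)))))
  = Cmult (RtoC (qsign q j * qbinom q n j * q ^ j / qfac q n))
          (qpoch (Cmult (qpow q nu) (RtoC (q ^ j))) q (m - n)).
Proof.
  intros Hnm Hj; set (t := qpow q nu) in *; set (k := (m - n)%nat).
  replace (INR j * (INR n + 1)) with (INR (j * S n)) by (rewrite mult_INR, S_INR; ring).
  rewrite <- minus_INR by exact Hnm.
  rewrite qpow_opp_nat, qpow_plus_nat, qpow_nat, !qpoch_RtoC by lra.
  replace (qpoch (Cmult t (RtoC (q ^ j))) q k)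
    with (Cdiv (Cmult (qpoch t q k) (qpoch (Cmult t (RtoC (q ^ k))) q j)) (qpoch t q j))
    by (rewrite qpoch_add_comm; field; exact Hj).
  replace (qsign q j * qbinom q n j) with (qpochR (/ q ^ n) q j * (q ^ n) ^ j / qfac q j)
    by (rewrite qpochR_qinv by exact hq; field; apply qfac_neq0, hq).
  replace (q ^ (j * S n)) with ((q ^ n) ^ j * q ^ j)
    by (rewrite <- pow_mult, <- pow_add; f_equal; lia).
  pose proof (qfac_neq0 q hq j); pose proof (qfac_neq0 q hq n).
  fold t k; repeat (rewrite RtoC_mult || rewrite RtoC_div by assumption).
  unfold qfac in *; field; repeat split; auto; apply RtoC_neq0; auto.
Qed.

End Coefficients.

Theorem mainTheorem15 (q : R) (hq : 0 < q < 1) (nu : C) (m : nat) (x : C) (hx : x <> RtoC 0) :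
  Cmult (Cpow x m) (qLommel q m nu x) =
    sum_n (fun n : nat =>
      Cmult (Cpow x (2 * n))
        (sum_n (fun j : nat =>
           Cmult
             (Cdiv (Cmult (qpoch (qpow q (RtoC (INR n - INR m))) q j)
                          (qpoch (qpow q (RtoC (INR n + 1))) q j))
                   (Cmult (qpoch (RtoC q) q j) (qpoch (RtoC q) q j)))
             (qpow q (Cmult (RtoC (INR j)) (Cplus nu (RtoC (INR m - INR n))))))
          (m - n)%nat)) m
  /\
  ((forall i : nat, qpow q (Cplus nu (RtoC (INR i))) <> RtoC 1) ->
   qLommel q m nu x =
    sum_n (fun n : nat =>
      Cmult (Cdiv (Cpow x (2 * n)) (Cpow x m))
        (Cmult (Cdiv (qpoch (qpow q nu) q (m - n)) (qpoch (RtoC q) q n))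
          (sum_n (fun j : nat =>
             Cmult
               (Cdiv (Cmult (qpoch (qpow q (RtoC (- INR n))) q j)
                            (qpoch (qpow q (Cplus nu (RtoC (INR m - INR n)))) q j))
                     (Cmult (qpoch (RtoC q) q j) (qpoch (qpow q nu) q j)))
               (qpow q (RtoC (INR j * (INR n + 1)))))
            n))) m).
Proof.
  pose proof (qLommel_eq_lommel_P q (proj1 hq) x hx m nu) as HP.
  assert (Hx2 : forall n, Cpow x (2 * n) = Cpow (Cmult x x) n).
  { intros n; rewrite Cpow_mult_r; f_equal; simpl; ring. }
  split.
  - rewrite HP; unfold lommel_P; apply sum_n_Cext; intros n Hn.
    rewrite Hx2; f_equal; unfold lommel_A, peval; apply sum_n_Cext; intros j _.
    symmetry; apply first_formula_term; assumption.
  - intros Hnu.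
    transitivity (Cmult (Cinv (Cpow x m)) (lommel_P q (Cmult x x) m (qpow q nu))).
    { rewrite <- HP; field; apply Cpow_nz, hx. }
    unfold lommel_P; rewrite <- sum_n_Cmult_l; apply sum_n_Cext; intros n Hn.
    rewrite <- lommel_A_eq_sum_qpoch by exact hq.
    rewrite <- (sum_n_Cext _ _ n (fun j _ => second_formula_term q hq nu m n j Hn
                                      (qpoch_qpow_neq0 q (proj1 hq) nu Hnu j))).
    rewrite sum_n_Cmult_l, Hx2; unfold Cdiv; ring.
Qed.
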